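(* Let $\mathbf{A},\mathbf{B}\in\mathbb{R}^{n\times m}$ be two matrices of the same shape. Then $\|\mathbf{A}\circ\mathbf{B}\|_{\mathrm{tr}}\le\mu(\mathbf{A})^2\,\|\mathbf{A}\|_{\mathrm{tr}}\,\|\mathbf{B}\|_{\mathrm{tr}}$.
   Context: $\circ$ denotes the Hadamard (entrywise) product and $\|\cdot\|_{\mathrm{tr}}$ the trace (nuclear) norm. Coherence: for a matrix $\mathbf{M}\in\mathbb{R}^{n\times m}$ of rank $r$ with (compact) SVD $\mathbf{M}=\mathbf{U}\boldsymbol\Sigma\mathbf{V}^\top$ ($\mathbf{U}\in\mathbb{R}^{n\times r}$, $\mathbf{V}\in\mathbb{R}^{m\times r}$), $\mu(\mathbf{M})=\max\{\max_{1\le i\le n}\|\mathbf{U}_{i,*}\|,\max_{1\le j\le m}\|\mathbf{V}_{j,*}\|\}$, where $\mathbf{U}_{i,*}$, $\mathbf{V}_{j,*}$ are rows and $\|\cdot\|$ is the Euclidean norm (not normalized by the matrix size). *)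

(* Real matrices over an arbitrary real closed field R
   (covers the real numbers). *)
From mathcomp Require Import all_boot all_order all_algebra.
Set Implicit Arguments. Unset Strict Implicit. Unset Printing Implicit Defensive.
Import Order.TTheory GRing.Theory Num.Theory.
Local Open Scope ring_scope.

Definition hadamard (R : ringType) (n m : nat) (A B : 'M[R]_(n, m)) : 'M[R]_(n, m) :=
  \matrix_(i, j) (A i j * B i j).

(* Compact SVD:  M = U diag(s) V^T, with U (n x r), V (m x r) having
   orthonormal columns and all singular values s_i > 0 (so r = rank M). *)
Definition is_csvd (R : rcfType) (n m r : nat) (M : 'M[R]_(n, m))
  (U : 'M[R]_(n, r)) (s : 'rV[R]_r) (V : 'M[R]_(m, r)) : Prop :=
  [/\ U^T *m U = 1%:M, V^T *m V = 1%:M, (forall i, 0 < s 0 i)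
    & M = U *m diag_mx s *m V^T].

(* Trace (nuclear) norm computed from a compact SVD: sum of singular values. *)
Definition trnorm_of (R : rcfType) (r : nat) (s : 'rV[R]_r) : R := \sum_(i < r) s 0 i.

Definition rnorm (R : rcfType) (k : nat) (v : 'rV[R]_k) : R :=
  Num.sqrt (\sum_(j < k) v 0 j ^+ 2).

(* Coherence computed from the SVD factors U, V (non-normalized). *)
Definition coh (R : rcfType) (n m r : nat) (U : 'M[R]_(n, r)) (V : 'M[R]_(m, r)) : R :=
  Num.max (\big[Num.max/0]_(i < n) rnorm (row i U))
          (\big[Num.max/0]_(j < m) rnorm (row j V)).

(* By the compact SVD of A o B, its trace norm is tr (UC^T (A o B) VC).  Expanding
   A = sum_k sA_k a_k b_k^T and B = sum_l sB_l c_l d_l^T (a_k, b_k, c_l, d_l the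
   columns of UA, VA, UB, VB) gives
   A o B = sum_(k,l) sA_k sB_l (a_k o c_l) (b_k o d_l)^T, and each rank-one term
   contributes tr (UC^T x y^T VC) = <UC^T x, VC^T y> <= (|x|^2 + |y|^2) / 2 by AM-GM
   and Bessel's inequality.  The entries of a_k and b_k are bounded by mu(A) while
   c_l and d_l are unit vectors, so |a_k o c_l|^2 and |b_k o d_l|^2 are at most
   mu(A)^2, and summing over k and l gives the bound. *)

From mathcomp Require Import all_boot all_order all_algebra.
From mathcomp Require Import ring lra.
Set Implicit Arguments. Unset Strict Implicit. Unset Printing Implicit Defensive.
Import Order.TTheory GRing.Theory Num.Theory.
Local Open Scope ring_scope.

Definition sqnorm (R : pzRingType) (n : nat) (x : 'cV[R]_n) : R := (x^T *m x) 0 0.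

Section Algebra.
Variable R : comNzRingType.

Lemma sqnormE n (x : 'cV[R]_n) : sqnorm x = \sum_i x i 0 ^+ 2.
Proof. by rewrite /sqnorm mxE; apply: eq_bigr => i _; rewrite mxE expr2. Qed.

Lemma mulmx_trC n (x y : 'cV[R]_n) : y^T *m x = x^T *m y.
Proof.
by apply/matrixP => i j; rewrite !ord1 !mxE; apply: eq_bigr => k _; rewrite !mxE mulrC.
Qed.

Lemma sqnormB n (x y : 'cV[R]_n) :
  sqnorm (x - y) = sqnorm x + sqnorm y - 2 * (x^T *m y) 0 0.
Proof.
rewrite /sqnorm [(x - y)^T]raddfB mulmxBr !mulmxBl [y^T *m x]mulmx_trC !mxE.
ring.
Qed.

Lemma sqnorm_isometry n r (U : 'M[R]_(n, r)) (z : 'cV_r) :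
  U^T *m U = 1%:M -> sqnorm (U *m z) = sqnorm z.
Proof. by move=> hU; rewrite /sqnorm trmx_mul -mulmxA [U^T *m _]mulmxA hU mul1mx. Qed.

Lemma sqnorm_col_orthonormal n r (U : 'M[R]_(n, r)) l :
  U^T *m U = 1%:M -> sqnorm (col l U) = 1.
Proof.
move=> hU; transitivity ((U^T *m U) l l); last by rewrite hU mxE eqxx.
by rewrite /sqnorm !mxE; apply: eq_bigr => i _; rewrite !mxE.
Qed.

Lemma mxtrace_rank1 n m r (U : 'M[R]_(n, r)) (V : 'M[R]_(m, r)) (x : 'cV_n) (y : 'cV_m) :
  \tr (U^T *m (x *m y^T) *m V) = ((U^T *m x)^T *m (V^T *m y)) 0 0.
Proof.
have -> : U^T *m (x *m y^T) *m V = (U^T *m x) *m (V^T *m y)^T.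
  by rewrite trmx_mul trmxK !mulmxA.
by rewrite mxtrace_mulC trace_mx11 mulmx_trC.
Qed.

Lemma mulmx_diag_trE n m r (U : 'M[R]_(n, r)) (s : 'rV_r) (V : 'M[R]_(m, r)) i j :
  (U *m diag_mx s *m V^T) i j = \sum_k U i k * s 0 k * V j k.
Proof. by rewrite mul_mx_diag !mxE; apply: eq_bigr => k _; rewrite !mxE. Qed.

Lemma hadamard_mulmx_diag_tr n m r r' (U : 'M[R]_(n, r)) (s : 'rV_r) (V : 'M[R]_(m, r))
    (U' : 'M[R]_(n, r')) (s' : 'rV_r') (V' : 'M[R]_(m, r')) :
  hadamard (U *m diag_mx s *m V^T) (U' *m diag_mx s' *m V'^T) =
  \sum_k \sum_l (s 0 k * s' 0 l) *:
    (hadamard (col k U) (col l U') *m (hadamard (col k V) (col l V'))^T).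
Proof.
apply/matrixP => i j; rewrite mxE !mulmx_diag_trE summxE mulr_suml.
apply: eq_bigr => k _; rewrite summxE mulr_sumr; apply: eq_bigr => l _.
by rewrite !mxE big_ord1 !mxE; ring.
Qed.

End Algebra.

Section Inequalities.
Variable R : realDomainType.

Lemma sqnorm_ge0 n (x : 'cV[R]_n) : 0 <= sqnorm x.
Proof. by rewrite sqnormE; apply: sumr_ge0 => i _; apply: sqr_ge0. Qed.

Lemma dotmx_le_sqnorm n (x y : 'cV[R]_n) : 2 * (x^T *m y) 0 0 <= sqnorm x + sqnorm y.
Proof. by rewrite -subr_ge0 -sqnormB sqnorm_ge0. Qed.

Lemma bessel n r (U : 'M[R]_(n, r)) (x : 'cV_n) :
  U^T *m U = 1%:M -> sqnorm (U^T *m x) <= sqnorm x.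
Proof.
move=> hU; have := sqnorm_ge0 (x - U *m (U^T *m x)).
rewrite sqnormB sqnorm_isometry //.
have -> : x^T *m (U *m (U^T *m x)) = (U^T *m x)^T *m (U^T *m x).
  by rewrite trmx_mul trmxK mulmxA.
rewrite -/(sqnorm _); lra.
Qed.

Lemma mxtrace_rank1_le n m r (U : 'M[R]_(n, r)) (V : 'M[R]_(m, r)) (x : 'cV_n) (y : 'cV_m) :
  U^T *m U = 1%:M -> V^T *m V = 1%:M ->
  2 * \tr (U^T *m (x *m y^T) *m V) <= sqnorm x + sqnorm y.
Proof.
move=> hU hV; rewrite mxtrace_rank1.
by apply: le_trans (dotmx_le_sqnorm _ _) _; apply: lerD; apply: bessel.
Qed.

Lemma sqnorm_hadamard_le n (x y : 'cV[R]_n) c :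
  (forall i, x i 0 ^+ 2 <= c) -> sqnorm (hadamard x y) <= c * sqnorm y.
Proof.
move=> hx; rewrite !sqnormE mulr_sumr; apply: ler_sum => i _.
by rewrite mxE exprMn; apply: ler_wpM2r; [apply: sqr_ge0 | apply: hx].
Qed.

End Inequalities.

Section RealClosed.
Variable R : rcfType.

Lemma csvd_trnorm n m r (M : 'M[R]_(n, m)) (U : 'M_(n, r)) (s : 'rV_r) (V : 'M_(m, r)) :
  is_csvd M U s V -> trnorm_of s = \tr (U^T *m M *m V).
Proof.
by case=> hU hV _ ->; rewrite !mulmxA hU mul1mx -mulmxA hV mulmx1 mxtrace_diag.
Qed.

Lemma sqr_le_rnorm k (v : 'rV[R]_k) j c : rnorm v <= c -> v 0 j ^+ 2 <= c ^+ 2.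
Proof.
move=> le_vc; apply: le_trans (_ : rnorm v ^+ 2 <= _); last first.
  by apply: lerXn2r; rewrite ?nnegrE ?sqrtr_ge0 ?(le_trans (sqrtr_ge0 _) le_vc).
rewrite sqr_sqrtr ?sumr_ge0 // => [|i _]; last exact: sqr_ge0.
by rewrite (bigD1 j) //= lerDl sumr_ge0 // => i _; apply: sqr_ge0.
Qed.

Lemma sqr_le_coh_l n m r (U : 'M[R]_(n, r)) (V : 'M[R]_(m, r)) i k :
  U i k ^+ 2 <= coh U V ^+ 2.
Proof.
have := sqr_le_rnorm k (_ : rnorm (row i U) <= coh U V); rewrite mxE; apply.
by rewrite le_max (le_bigmax 0 (fun i => rnorm (row i U))).
Qed.

Lemma sqr_le_coh_r n m r (U : 'M[R]_(n, r)) (V : 'M[R]_(m, r)) j k :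
  V j k ^+ 2 <= coh U V ^+ 2.
Proof.
have := sqr_le_rnorm k (_ : rnorm (row j V) <= coh U V); rewrite mxE; apply.
by rewrite le_max (le_bigmax 0 (fun j => rnorm (row j V))) orbT.
Qed.

Lemma mxtrace_hadamard_rank1_le n m rA rB rC
    (UA : 'M[R]_(n, rA)) (VA : 'M[R]_(m, rA)) (UB : 'M[R]_(n, rB)) (VB : 'M[R]_(m, rB))
    (UC : 'M[R]_(n, rC)) (VC : 'M[R]_(m, rC)) k l :
  UB^T *m UB = 1%:M -> VB^T *m VB = 1%:M -> UC^T *m UC = 1%:M -> VC^T *m VC = 1%:M ->
  \tr (UC^T *m (hadamard (col k UA) (col l UB) *m (hadamard (col k VA) (col l VB))^T) *m VC)
    <= coh UA VA ^+ 2.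
Proof.
move=> hUB hVB hUC hVC.
have hx : sqnorm (hadamard (col k UA) (col l UB)) <= coh UA VA ^+ 2.
  rewrite -[_ ^+ 2]mulr1 -(sqnorm_col_orthonormal l hUB).
  by apply: sqnorm_hadamard_le => i; rewrite mxE sqr_le_coh_l.
have hy : sqnorm (hadamard (col k VA) (col l VB)) <= coh UA VA ^+ 2.
  rewrite -[_ ^+ 2]mulr1 -(sqnorm_col_orthonormal l hVB).
  by apply: sqnorm_hadamard_le => j; rewrite mxE sqr_le_coh_r.
have := mxtrace_rank1_le (hadamard (col k UA) (col l UB)) (hadamard (col k VA) (col l VB)) hUC hVC.
lra.
Qed.

End RealClosed.

Theorem lemma3 (R : rcfType) (n m : nat) (A B : 'M[R]_(n, m))
  (rA : nat) (UA : 'M[R]_(n, rA)) (sA : 'rV[R]_rA) (VA : 'M[R]_(m, rA))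
  (rB : nat) (UB : 'M[R]_(n, rB)) (sB : 'rV[R]_rB) (VB : 'M[R]_(m, rB))
  (rC : nat) (UC : 'M[R]_(n, rC)) (sC : 'rV[R]_rC) (VC : 'M[R]_(m, rC)) :
  is_csvd A UA sA VA -> is_csvd B UB sB VB -> is_csvd (hadamard A B) UC sC VC ->
  trnorm_of sC <= coh UA VA ^+ 2 * trnorm_of sA * trnorm_of sB.
Proof.
move=> hA hB hC; rewrite (csvd_trnorm hC).
case: hA hB hC => _ _ sA_gt0 -> [hUB hVB sB_gt0 ->] [hUC hVC _ _].
rewrite hadamard_mulmx_diag_tr mulmx_sumr mulmx_suml linear_sum.
rewrite /trnorm_of -mulrA mulr_suml mulr_sumr; apply: ler_sum => k _.
rewrite mulmx_sumr mulmx_suml linear_sum mulr_sumr mulr_sumr; apply: ler_sum => l _.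
rewrite -scalemxAr -scalemxAl linearZ /= mulrC.
apply: ler_wpM2r; first by rewrite mulr_ge0 // ltW.
exact: mxtrace_hadamard_rank1_le.
Qed.
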